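(* For any $M\in\mathbb{N}$ and any $\delta>0$, there exists a $\textsc{ReLU}$ network $f:\mathbb R\rightarrow\mathbb R^2$ of width $2$ such that for all $x\in[0,1]\setminus\mathcal D_{M,\delta}$, $$f(x)=\big(q_M(x),\ 2^M\,(x-q_M(x))\big),$$ where $\mathcal D_{M,\delta}:=\bigcup_{i=1}^{2^M-1}(i\cdot2^{-M}-\delta,\ i\cdot 2^{-M})$. Furthermore, $f(\mathbb R)\subset[0,1-2^{-M}]\times[0,1]$.
   Context: $\mathcal C_M:=\{0,2^{-M},2\cdot2^{-M},\dots,1-2^{-M}\}$ and $q_M:[0,1]\to\mathcal C_M$, $q_M(x)=\max\{c\in\mathcal C_M:c\le x\}$. A $\textsc{ReLU}$ network is $t_L\circ\sigma_{L-1}\circ\cdots\circ\sigma_1\circ t_1$ with affine $t_\ell:\mathbb R^{d_{\ell-1}}\to\mathbb R^{d_\ell}$ and coordinatewise $\textsc{ReLU}$ $\sigma_\ell$; its width is $\max\{d_1,\dots,d_{L-1}\}$. *)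

From Stdlib Require Import Reals Lra List.
Import ListNotations.
Open Scope R_scope.

Definition in_CM (M : nat) (c : R) : Prop :=
  exists k : nat, (k < 2 ^ M)%nat /\ c = INR k / 2 ^ M.

Definition is_qM (M : nat) (x c : R) : Prop :=
  in_CM M c /\ c <= x /\ (forall c', in_CM M c' -> c' <= x -> c' <= c).

Definition in_DM (M : nat) (delta x : R) : Prop :=
  exists i : nat, (1 <= i <= 2 ^ M - 1)%nat /\
    INR i / 2 ^ M - delta < x /\ x < INR i / 2 ^ M.

(** ReLU networks. Vectors in R^d are represented as functions nat -> R
    (only the first d coordinates are ever read). An affine layer
    t : R^din -> R^dout is given by a weight matrix and a bias. *)
Record layer : Type := mkLayer {
  din : nat; dout : nat;
  weight : nat -> nat -> R;   (* weight i j : row i < dout, column j < din *)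
  bias : nat -> R }.

Fixpoint sum_to (n : nat) (f : nat -> R) : R :=
  match n with O => 0 | S n' => sum_to n' f + f n' end.

Definition affine (l : layer) (v : nat -> R) : nat -> R :=
  fun i => sum_to (din l) (fun j => weight l i j * v j) + bias l i.

Definition relu (v : nat -> R) : nat -> R := fun i => Rmax 0 (v i).

Fixpoint eval_net (ls : list layer) (v : nat -> R) : nat -> R :=
  match ls with
  | [] => v
  | [l] => affine l v
  | l :: ls' => eval_net ls' (relu (affine l v))
  end.

Fixpoint chain (n m : nat) (ls : list layer) : Prop :=
  match ls with
  | [] => False
  | [l] => din l = n /\ dout l = m
  | l :: ls' => din l = n /\ chain (dout l) m ls'
  end.

Definition width (ls : list layer) : nat :=
  fold_right Nat.max 0%nat (map dout (removelast ls)).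

Definition net_apply (ls : list layer) (x : R) : nat -> R :=
  eval_net ls (fun j => if Nat.eqb j 0 then x else 0).

(** The network computes a continuous staircase, built one step at a time by
    q_(k+1) = min (c_(k+1), max (q_k, r_(k+1))), where c_k = k 2^-M and the
    ramp r_(k+1) rises linearly from 0 at c_(k+1) - d to c_(k+1) at c_(k+1).
    With the identity min c (max q v) = c - relu (c - (v + relu (q - v))),
    each step costs two ReLU layers acting on the width-2 state
    (x clamped to [0,1], c_k - q_k).  Away from the windows of length
    d <= delta to the left of the grid points every ramp is either
    <= 0 or >= its grid point, so the staircase equals q_M there; everywhere
    q <= x <= q + 2^-M, which gives the range bound. *)

From Stdlib Require Import Reals List Lra Lia.
Import ListNotations.
Open Scope R_scope.

Ltac Rminmax_cases := unfold Rmin, Rmax in *; repeat destruct Rle_dec; lra.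

Definition layer2 (w00 w01 b0 w10 w11 b1 : R) : layer :=
  mkLayer 2 2
    (fun i j => match i, j with
                | O, O => w00 | O, S O => w01 | S O, O => w10 | S O, S O => w11
                | _, _ => 0 end)
    (fun i => match i with O => b0 | S O => b1 | _ => 0 end).

Lemma affine_layer2_0 w00 w01 b0 w10 w11 b1 v :
  affine (layer2 w00 w01 b0 w10 w11 b1) v 0%nat = w00 * v 0%nat + w01 * v 1%nat + b0.
Proof. unfold affine; simpl; ring. Qed.

Lemma affine_layer2_1 w00 w01 b0 w10 w11 b1 v :
  affine (layer2 w00 w01 b0 w10 w11 b1) v 1%nat = w10 * v 0%nat + w11 * v 1%nat + b1.
Proof. unfold affine; simpl; ring. Qed.

Definition hidden (ls : list layer) (v : nat -> R) : nat -> R :=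
  fold_left (fun w l => relu (affine l w)) ls v.

Lemma eval_net_app ls1 ls2 v :
  ls2 <> [] -> eval_net (ls1 ++ ls2) v = eval_net ls2 (hidden ls1 v).
Proof.
  intro Hne; revert v; induction ls1 as [|l ls1 IH]; intro v; simpl; auto.
  rewrite <- IH; destruct (ls1 ++ ls2) eqn:E; auto.
  apply app_eq_nil in E; tauto.
Qed.

Lemma chain_cons l ls n m :
  ls <> [] -> din l = n -> chain (dout l) m ls -> chain n m (l :: ls).
Proof. intros Hne Hdin Hch; destruct ls; [congruence | simpl; auto]. Qed.

Lemma chain_square w ls :
  ls <> [] -> Forall (fun l => din l = w /\ dout l = w) ls -> chain w w ls.
Proof.
  intro Hne; induction 1 as [|l ls [Hi Ho] Hls IH]; [congruence|].
  destruct ls as [|l' ls']; [simpl; auto|].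
  apply chain_cons; [discriminate | exact Hi | rewrite Ho; apply IH; discriminate].
Qed.

Lemma max_dout_const w ls :
  ls <> [] -> Forall (fun l => dout l = w) ls -> fold_right Nat.max 0%nat (map dout ls) = w.
Proof.
  intro Hne; induction 1 as [|l ls Ho Hls IH]; [congruence|].
  destruct ls as [|l' ls']; simpl in *; [lia|].
  rewrite IH by discriminate; lia.
Qed.

Definition grid (n : R) (k : nat) : R := INR k / n.

Lemma grid_0 n : grid n 0 = 0.
Proof. unfold grid, Rdiv; simpl; apply Rmult_0_l. Qed.

Lemma grid_S n k : 0 < n -> grid n (S k) = grid n k + / n.
Proof. intro; unfold grid; rewrite S_INR; field; lra. Qed.

Lemma grid_nonneg n k : 0 < n -> 0 <= grid n k.
Proof. intro; unfold grid; apply Rmult_le_pos; [apply pos_INR | left; apply Rinv_0_lt_compat; lra]. Qed.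

Lemma grid_le n i j : 0 < n -> (i <= j)%nat -> grid n i <= grid n j.
Proof.
  intros; unfold grid, Rdiv; apply Rmult_le_compat_r;
    [left; apply Rinv_0_lt_compat; lra | apply le_INR; auto].
Qed.

Definition ramp (c d X : R) : R := c * (X - c + d) / d.

Lemma ramp_ge c d X : 0 < d -> 0 <= c -> c <= X -> c <= ramp c d X.
Proof.
  intros Hd Hc HX; unfold ramp; apply Rmult_le_reg_r with d; [lra|].
  field_simplify; [nra | lra].
Qed.

Lemma ramp_nonpos c d X : 0 < d -> 0 <= c -> X <= c - d -> ramp c d X <= 0.
Proof.
  intros Hd Hc HX; unfold ramp; apply Rmult_le_reg_r with d; [lra|].
  field_simplify; [nra | lra].
Qed.

Lemma ramp_le c d X : 0 < d -> d <= c -> X <= c -> ramp c d X <= X.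
Proof.
  intros Hd Hc HX; unfold ramp; apply Rmult_le_reg_r with d; [lra|].
  field_simplify; [nra | lra].
Qed.

Fixpoint staircase (n d : R) (k : nat) (X : R) : R :=
  match k with
  | O => 0
  | S k' => Rmin (grid n k) (Rmax (staircase n d k' X) (ramp (grid n k) d X))
  end.

Section Staircase.

Variables (n d : R).
Hypotheses (Hn : 0 < n) (Hd : 0 < d).

Lemma staircase_bounds X k : 0 <= staircase n d k X <= grid n k.
Proof.
  induction k as [|k IH]; simpl.
  - rewrite grid_0; lra.
  - pose proof (grid_nonneg n (S k) Hn); Rminmax_cases.
Qed.

Lemma staircase_le X k : d <= / n -> 0 <= X -> staircase n d k X <= X.
Proof.
  intros Hdn HX; induction k as [|k IH]; simpl; [lra|].
  destruct (Rle_dec (grid n (S k)) X) as [Hc|Hc]; [Rminmax_cases|].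
  assert (d <= grid n (S k)) by (rewrite grid_S; pose proof (grid_nonneg n k Hn); lra).
  pose proof (ramp_le (grid n (S k)) d X Hd ltac:(lra) ltac:(lra)); Rminmax_cases.
Qed.

Lemma staircase_ge X k : Rmin (grid n k) (X - / n) <= staircase n d k X.
Proof.
  induction k as [|k IH]; simpl.
  - rewrite grid_0; Rminmax_cases.
  - pose proof (grid_nonneg n (S k) Hn); rewrite grid_S in * by exact Hn.
    destruct (Rle_dec (grid n k + / n) X) as [Hc|Hc].
    + pose proof (ramp_ge (grid n k + / n) d X Hd ltac:(lra) Hc); Rminmax_cases.
    + Rminmax_cases.
Qed.

Lemma staircase_eq_grid X j k :
  (j <= k)%nat -> grid n j <= X ->
  (forall i, (j < i <= k)%nat -> X <= grid n i - d) ->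
  staircase n d k X = grid n j.
Proof.
  intros Hjk HX Hgap; induction k as [|k IH].
  - replace j with 0%nat by lia; rewrite grid_0; reflexivity.
  - pose proof (staircase_bounds X k); pose proof (grid_nonneg n j Hn); simpl.
    destruct (Nat.eq_dec j (S k)) as [->|Hne].
    + pose proof (ramp_ge (grid n (S k)) d X Hd (grid_nonneg _ _ Hn) HX).
      pose proof (grid_le n k (S k) Hn ltac:(lia)); Rminmax_cases.
    + rewrite IH; [| lia | intros i Hi; apply Hgap; lia].
      pose proof (ramp_nonpos (grid n (S k)) d X Hd (grid_nonneg _ _ Hn) (Hgap (S k) ltac:(lia))).
      pose proof (grid_le n j (S k) Hn ltac:(lia)); Rminmax_cases.
Qed.

Lemma staircase_residual X k :
  d <= / n -> 0 <= X <= grid n k + / n -> 0 <= n * (X - staircase n d k X) <= 1.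
Proof.
  intros Hdn HX.
  pose proof (staircase_le X k Hdn ltac:(lra)).
  pose proof (staircase_ge X k) as Hge.
  replace (Rmin (grid n k) (X - / n)) with (X - / n) in Hge by Rminmax_cases.
  split; [apply Rmult_le_pos; lra|].
  replace 1 with (n * / n) by (field; lra).
  apply Rmult_le_compat_l; lra.
Qed.

End Staircase.

Definition clamp01 (x : R) : R := Rmin 1 (Rmax 0 x).

Lemma clamp01_range x : 0 <= clamp01 x <= 1.
Proof. unfold clamp01; Rminmax_cases. Qed.

Lemma clamp01_id x : 0 <= x <= 1 -> clamp01 x = x.
Proof. intro; unfold clamp01; Rminmax_cases. Qed.

Definition input_layer : layer :=
  mkLayer 1 2 (fun _ _ => 1) (fun i => match i with S O => -1 | _ => 0 end).

Definition clamp_layer : layer := layer2 1 (-1) 0 0 0 0.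

(** Two layers mapping the state (X, c_k - q_k) to (X, c_(k+1) - q_(k+1)):
    the second coordinate becomes q_k - r_(k+1), then
    c_(k+1) - (r_(k+1) + relu (q_k - r_(k+1))). *)
Definition step_layers (n d : R) (k : nat) : list layer :=
  let c := grid n (S k) in
  [layer2 1 0 0 (- (c / d)) (-1) (grid n k - ramp c d 0);
   layer2 1 0 0 (- (c / d)) (-1) (c - ramp c d 0)].

Fixpoint staircase_layers (n d : R) (k : nat) : list layer :=
  match k with
  | O => []
  | S k' => staircase_layers n d k' ++ step_layers n d k'
  end.

Definition output_layer (n : R) (m : nat) : layer :=
  layer2 0 (-1) (grid n m) n n (- n * grid n m).

Definition staircase_net (n d : R) (m : nat) : list layer :=
  input_layer :: clamp_layer :: staircase_layers n d m ++ [output_layer n m].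

Definition scalar_input (x : R) : nat -> R := fun j => if Nat.eqb j 0 then x else 0.

Lemma min_max_relu c q v : Rmin c (Rmax q v) = c - Rmax 0 (c - (v + Rmax 0 (q - v))).
Proof. Rminmax_cases. Qed.

Lemma hidden_staircase n d k x :
  0 < d ->
  hidden (input_layer :: clamp_layer :: staircase_layers n d k) (scalar_input x) 0%nat
    = clamp01 x /\
  hidden (input_layer :: clamp_layer :: staircase_layers n d k) (scalar_input x) 1%nat
    = grid n k - staircase n d k (clamp01 x).
Proof.
  intro Hd; induction k as [|k [IH0 IH1]].
  - rewrite grid_0; unfold hidden, relu, affine, clamp01, scalar_input; simpl.
    split; Rminmax_cases.
  - unfold hidden in *; cbn [staircase_layers].
    rewrite app_comm_cons, app_comm_cons, fold_left_app.
    revert IH0 IH1; generalize (fold_left (fun w l => relu (affine l w))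
      (input_layer :: clamp_layer :: staircase_layers n d k) (scalar_input x)).
    intros w IH0 IH1; cbn [fold_left step_layers]; unfold relu.
    rewrite !affine_layer2_0, !affine_layer2_1, !affine_layer2_0, IH0, IH1.
    pose proof (clamp01_range x); set (X := clamp01 x) in *.
    rewrite !Rmult_0_l, !Rmult_1_l, !Rplus_0_r, !(Rmax_right 0 X) by lra.
    split; [reflexivity|].
    set (c := grid n (S k)); cbn [staircase]; fold c.
    rewrite min_max_relu; unfold ramp.
    set (q := staircase n d k X).
    replace (- (c / d) * X + -1 * (grid n k - q) + (grid n k - c * (0 - c + d) / d))
      with (q - c * (X - c + d) / d) by (field; lra).
    replace (- (c / d) * X + -1 * Rmax 0 (q - c * (X - c + d) / d) + (c - c * (0 - c + d) / d))
      with (c - (c * (X - c + d) / d + Rmax 0 (q - c * (X - c + d) / d))) by (field; lra).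
    ring.
Qed.

Lemma net_apply_staircase n d m x :
  0 < d ->
  net_apply (staircase_net n d m) x 0%nat = staircase n d m (clamp01 x) /\
  net_apply (staircase_net n d m) x 1%nat = n * (clamp01 x - staircase n d m (clamp01 x)).
Proof.
  intro Hd; unfold net_apply, staircase_net.
  rewrite app_comm_cons, app_comm_cons, eval_net_app by discriminate.
  cbn [eval_net]; fold (scalar_input x).
  destruct (hidden_staircase n d m x Hd) as [H0 H1].
  unfold output_layer; rewrite affine_layer2_0, affine_layer2_1, H0, H1.
  split; ring.
Qed.

Lemma staircase_layers_square n d k :
  Forall (fun l => din l = 2%nat /\ dout l = 2%nat) (staircase_layers n d k).
Proof.
  induction k as [|k IH]; simpl; auto.
  apply Forall_app; split; auto; repeat constructor.
Qed.

Lemma staircase_net_chain n d m : chain 1 2 (staircase_net n d m).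
Proof.
  apply chain_cons; [discriminate | reflexivity|].
  apply chain_square; [discriminate|].
  constructor; [split; reflexivity|].
  apply Forall_app; split; [apply staircase_layers_square | repeat constructor].
Qed.

Lemma staircase_net_width n d m : width (staircase_net n d m) = 2%nat.
Proof.
  unfold width, staircase_net.
  rewrite app_comm_cons, app_comm_cons, removelast_last.
  apply max_dout_const; [discriminate|].
  constructor; [reflexivity|]; constructor; [reflexivity|].
  eapply Forall_impl; [|apply staircase_layers_square]; simpl; tauto.
Qed.

Lemma grid_pow_last M : grid (2 ^ M) (2 ^ M - 1) = 1 - / 2 ^ M.
Proof.
  assert ((2 ^ M <> 0)%nat) by (apply Nat.pow_nonzero; lia).
  assert (0 < 2 ^ M) by (apply pow_lt; lra).
  unfold grid; rewrite minus_INR, pow_INR by lia; simpl INR.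
  replace (1 + 1) with 2 by ring; field; lra.
Qed.

Lemma qM_gap M delta x k :
  ~ in_DM M delta x -> is_qM M x (grid (2 ^ M) k) ->
  forall i, (k < i <= 2 ^ M - 1)%nat -> x <= grid (2 ^ M) i - delta.
Proof.
  intros HD [_ [_ Hmax]] i Hi.
  assert (Hn : 0 < 2 ^ M) by (apply pow_lt; lra).
  assert (Hnext : x < grid (2 ^ M) (S k)).
  { destruct (Rlt_le_dec x (grid (2 ^ M) (S k))) as [|Hle]; auto.
    assert (grid (2 ^ M) (S k) <= grid (2 ^ M) k)
      by (apply Hmax; [exists (S k); split; [lia | reflexivity] | exact Hle]).
    rewrite grid_S in * by exact Hn; pose proof (Rinv_0_lt_compat _ Hn); lra. }
  assert (x <= grid (2 ^ M) (S k) - delta).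
  { destruct (Rle_dec x (grid (2 ^ M) (S k) - delta)) as [|Hgt]; auto.
    exfalso; apply HD; exists (S k); unfold grid in *; split; [lia | lra]. }
  pose proof (grid_le (2 ^ M) (S k) i Hn ltac:(lia)); lra.
Qed.

Theorem lemma11 (M : nat) (delta : R) (hdelta : 0 < delta) :
  exists ls : list layer,
    chain 1 2 ls /\ width ls = 2%nat /\
    (forall x : R, 0 <= x <= 1 -> ~ in_DM M delta x ->
       forall c : R, is_qM M x c ->
         net_apply ls x 0%nat = c /\
         net_apply ls x 1%nat = 2 ^ M * (x - c)) /\
    (forall x : R,
       0 <= net_apply ls x 0%nat <= 1 - / 2 ^ M /\
       0 <= net_apply ls x 1%nat <= 1).
Proof.
  set (n := 2 ^ M); set (d := Rmin delta (/ n)); set (m := (2 ^ M - 1)%nat).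
  assert (Hn : 0 < n) by (apply pow_lt; lra).
  assert (Hd : 0 < d) by (unfold d; pose proof (Rinv_0_lt_compat n Hn); Rminmax_cases).
  assert (Hdn : d <= / n) by apply Rmin_r.
  assert (Hdelta : d <= delta) by apply Rmin_l.
  exists (staircase_net n d m).
  split; [apply staircase_net_chain|]; split; [apply staircase_net_width|].
  split; intro x; destruct (net_apply_staircase n d m x Hd) as [-> ->].
  - intros Hx HD c Hc; rewrite clamp01_id by exact Hx.
    destruct (proj1 Hc) as [k [Hk ->]].
    assert (Hgap : forall i, (k < i <= m)%nat -> x <= grid n i - d).
    { intros i Hi; pose proof (qM_gap M delta x k HD Hc i Hi) as G; fold n in G.
      lra. }
    rewrite (staircase_eq_grid n d Hn Hd x k m); [split; reflexivity | unfold m; lia | apply Hc | exact Hgap].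
  - pose proof (clamp01_range x); pose proof (grid_pow_last M) as Hlast; fold n m in Hlast.
    split; [pose proof (staircase_bounds n d Hn (clamp01 x) m); lra|].
    apply staircase_residual; auto; lra.
Qed.
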